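(* Let $\mu$ be a doubling measure on $\mathbb Z$ and set $a_j=\mu(j)$. If there exist integers $j_1<j_2<j_3$ with $a_{j_2}<\min\{a_{j_1},a_{j_3}\}$, then $C^0_\mu>3$.
   Context: $\mathbb Z$ is the infinite path graph with edges $\{j,j+1\}$ and distance $|i-j|$. A measure is a weight function $\mu:\mathbb Z\to(0,\infty)$, $\mu(A)=\sum_{v\in A}\mu(v)$; $B(x,r)=\{y:|x-y|\le r\}$; $\mu$ is doubling if $\sup\{\mu(B(x,2k+1))/\mu(B(x,k)):x\in\mathbb Z,k\ge0\}<\infty$; $C^0_\mu=\sup_{x\in\mathbb Z}\mu(B(x,1))/\mu(x)$. *)

From HB Require Import structures.
From mathcomp Require Import all_boot all_order all_algebra.
From mathcomp Require Import all_classical all_reals ereal.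
Set Implicit Arguments. Unset Strict Implicit. Unset Printing Implicit Defensive.
Import Order.TTheory GRing.Theory Num.Theory.
Local Open Scope ring_scope.

Definition ball_measure (R : realType) (mu : int -> R) (x : int) (r : nat) : R :=
  \sum_(i < (2 * r).+1) mu (x - r%:Z + i%:Z).

Definition is_measure (R : realType) (mu : int -> R) : Prop := forall v, 0 < mu v.

Definition doubling (R : realType) (mu : int -> R) : Prop :=
  (ereal_sup [set e : \bar R | exists (x : int) (k : nat),
     e = (ball_measure mu x (2 * k + 1) / ball_measure mu x k)%:E] < +oo)%E.

Definition C0 (R : realType) (mu : int -> R) : \bar R :=
  ereal_sup [set e : \bar R | exists x : int, e = (ball_measure mu x 1 / mu x)%:E].

(* If C^0_mu <= 3 then mu(x-1) + mu(x+1) <= 2 mu(x) for every x, i.e. j |-> a_j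
   is a concave sequence.  Its increments are then nonincreasing, so a_{j_2} < a_{j_3}
   forces a_{j_2} < a_{j_2+1}, and symmetrically a_{j_2} < a_{j_1} forces
   a_{j_2} < a_{j_2-1}, contradicting concavity at j_2. *)
From HB Require Import structures.
From mathcomp Require Import all_boot all_order all_algebra.
From mathcomp Require Import all_classical all_reals ereal.
From mathcomp Require Import lra ring.
Set Implicit Arguments. Unset Strict Implicit. Unset Printing Implicit Defensive.
Import Order.TTheory GRing.Theory Num.Theory.
Local Open Scope ring_scope.

Definition midpoint_concave (R : realFieldType) (f : int -> R) : Prop :=
  forall x, f (x - 1) + f (x + 1) <= 2 * f x.

Section MidpointConcave.
Variables (R : realFieldType) (f : int -> R).
Hypothesis concave_f : midpoint_concave f.

Lemma midpoint_concave_incr_le (x : int) (n : nat) :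
  f (x + n.+1%:Z) - f (x + n%:Z) <= f (x + 1) - f x.
Proof.
elim: n => [|n IH]; first by rewrite addr0 lexx.
have := concave_f (x + n.+1%:Z).
have -> : x + n.+1%:Z - 1 = x + n%:Z by rewrite intS; ring.
have -> : x + n.+1%:Z + 1 = x + n.+2%:Z by rewrite [n.+2%:Z]intS; ring.
lra.
Qed.

Lemma midpoint_concave_chord (x : int) (n : nat) :
  f (x + n%:Z) - f x <= n%:R * (f (x + 1) - f x).
Proof.
elim: n => [|n IH]; first by rewrite addr0 subrr mul0r.
have := midpoint_concave_incr_le x n; rewrite -natr1; lra.
Qed.

Lemma midpoint_concave_lt_succ (x y : int) :
  x < y -> f x < f y -> f x < f (x + 1).
Proof.
move=> lt_xy lt_fxy.
have def_y : y = x + `|y - x|%N%:Z by rewrite gez0_abs ?subr_ge0 ?ltW //; ring.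
have n_gt0 : 0 < `|y - x|%N%:R :> R by rewrite ltr0n absz_gt0 subr_eq0 gt_eqF.
have := midpoint_concave_chord x `|y - x|%N; rewrite -def_y => chord.
by rewrite -subr_gt0 -(pmulr_rgt0 _ n_gt0); lra.
Qed.

End MidpointConcave.

Lemma midpoint_concave_opp (R : realFieldType) (f : int -> R) :
  midpoint_concave f -> midpoint_concave (f \o -%R).
Proof. by move=> concave_f x /=; rewrite !opprD opprK addrC concave_f. Qed.

Lemma midpoint_concave_no_strict_min (R : realFieldType) (f : int -> R) (x y z : int) :
  midpoint_concave f -> x < y -> y < z -> Num.min (f x) (f z) <= f y.
Proof.
move=> concave_f lt_xy lt_yz; rewrite leNgt lt_min; apply/negP => /andP[lt_fyx lt_fyz].
have up := midpoint_concave_lt_succ concave_f lt_yz lt_fyz.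
have down : f y < f (y - 1).
  have := @midpoint_concave_lt_succ _ _ (midpoint_concave_opp concave_f) (- y) (- x).
  by rewrite /= !opprK opprD opprK ltrN2; apply.
have := concave_f y; lra.
Qed.

Lemma ball_measure1 (R : realType) (mu : int -> R) (x : int) :
  ball_measure mu x 1 = mu (x - 1) + mu x + mu (x + 1).
Proof.
rewrite /ball_measure !big_ord_recl big_ord0 /= /bump /= !addn0 !addr0 addrA.
by congr (mu _ + mu _ + mu _); ring.
Qed.

Lemma C0_le3_midpoint_concave (R : realType) (mu : int -> R) :
  is_measure mu -> (C0 mu <= 3%:E)%E -> midpoint_concave mu.
Proof.
move=> mu_gt0 C0_le3 x.
have : ((ball_measure mu x 1 / mu x)%:E <= 3%:E)%E.
  by apply: le_trans C0_le3; apply: ereal_sup_ubound; exists x.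
rewrite lee_fin ler_pdivrMr // ball_measure1; lra.
Qed.

Theorem lemma4p4 (R : realType) (mu : int -> R) (hmu : is_measure mu)
  (hd : doubling mu) (j1 j2 j3 : int) :
  j1 < j2 -> j2 < j3 -> mu j2 < Num.min (mu j1) (mu j3) ->
  (3%:E < C0 mu)%E.
Proof.
move=> lt12 lt23 strict_min; rewrite ltNge; apply/negP.
move=> /(C0_le3_midpoint_concave hmu) /midpoint_concave_no_strict_min.
by move=> /(_ _ _ _ lt12 lt23); rewrite leNgt strict_min.
Qed.
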